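(* Let $d\ge2$ and let $b,c\ge0$ be real with $a=\frac1d\big(1-(b+c)\frac{d(d-1)}2\big)\ge0$, and let $$\rho_{bc}=a\sum_{i=0}^{d-1}|ii\rangle\langle ii|+b\sum_{i<j}|\psi^-_{ij}\rangle\langle\psi^-_{ij}|+c\sum_{i<j}|\psi^+_{ij}\rangle\langle\psi^+_{ij}|.$$ If $\rho_{bc}^{PT}\ge0$, then $\rho_{bc}$ is separable.
   Context: $|\psi^{\pm}_{ij}\rangle=\frac1{\sqrt2}(|ij\rangle\pm|ji\rangle)$, sums over $0\le i<j\le d-1$. $\rho^{PT}$ is the partial transpose on the second factor, $\langle ij|\rho^{PT}|kl\rangle=\langle il|\rho|kj\rangle$. A bipartite state is separable if it can be written as $\sum_ip_i|\alpha_i\rangle\langle\alpha_i|\otimes|\beta_i\rangle\langle\beta_i|$ with $p_i\ge0$. *)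

(* operators on C^d (x) C^d as 'M[C]_(d*d) via mxtens (index (i,j) <-> i*d+j). *)
From HB Require Import structures.
From mathcomp Require Import all_boot all_order all_algebra.
From mathcomp Require Import complex mxtens.
From mathcomp Require Import reals.
Set Implicit Arguments. Unset Strict Implicit. Unset Printing Implicit Defensive.
Import Order.TTheory GRing.Theory Num.Theory.
Local Open Scope ring_scope.
Local Open Scope complex_scope.

Section QDefs.
Variable R : realType.
Local Notation C := R[i].

Definition adj {m n} (A : 'M[C]_(m, n)) : 'M[C]_(n, m) := (map_mx Num.conj A)^T.

Definition ketbra {n} (v : 'cV[C]_n) : 'M[C]_n := v *m adj v.

Definition ket {d} (i : 'I_d) : 'cV[C]_d := delta_mx i 0.

Definition ket2 {d} (i j : 'I_d) : 'cV[C]_(d * d) :=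
  \col_k (k == mxtens_index (i, j))%:R.

Definition psi_plus {d} (i j : 'I_d) : 'cV[C]_(d * d) :=
  (sqrtC 2)^-1 *: (ket2 i j + ket2 j i).
Definition psi_minus {d} (i j : 'I_d) : 'cV[C]_(d * d) :=
  (sqrtC 2)^-1 *: (ket2 i j - ket2 j i).

(* partial transpose on the second factor: <ij|rho^PT|kl> = <il|rho|kj> *)
Definition ptrans {d} (rho : 'M[C]_(d * d)) : 'M[C]_(d * d) :=
  \matrix_(r, s) rho (mxtens_index ((mxtens_unindex r).1, (mxtens_unindex s).2))
                     (mxtens_index ((mxtens_unindex s).1, (mxtens_unindex r).2)).

Definition psdmx {n} (A : 'M[C]_n) : Prop :=
  adj A = A /\ forall v : 'cV[C]_n, 0 <= (adj v *m A *m v) 0 0.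

Definition separable {d} (rho : 'M[C]_(d * d)) : Prop :=
  exists (N : nat) (p : 'I_N -> R) (alpha beta : 'I_N -> 'cV[C]_d),
    (forall k, 0 <= p k) /\
    rho = \sum_(k < N) (p k)%:C *: tensmx (ketbra (alpha k)) (ketbra (beta k)).

Definition coef_a (d : nat) (b c : R) : R :=
  (1 - (b + c) * ((d * (d - 1))%:R / 2)) / d%:R.

Definition rho_bc (d : nat) (b c : R) : 'M[C]_(d * d) :=
  (coef_a d b c)%:C *: \sum_(i < d) ketbra (ket2 i i)
  + b%:C *: \sum_(i < d) \sum_(j < d | (i < j)%N) ketbra (psi_minus i j)
  + c%:C *: \sum_(i < d) \sum_(j < d | (i < j)%N) ketbra (psi_plus i j).

End QDefs.

(* Write [rho_bc = x 1 + y F + z D], where F is the flip |kl> |-> |lk>,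
   D = sum_i |ii><ii|, x = (b + c)/2, y = (c - b)/2 and z = a - c.  Testing the
   partial transpose on |00> - |11> and on sum_i |ii> gives x + z >= 0 and
   x + d y + z >= 0.  Conversely, averaging |u><u| (x) |v><v| over the local
   phase unitaries diag(i^w_k) (x) diag(i^w_k) keeps exactly the entries
   <kl|.|mn> with {k,l} = {m,n}, so it maps product states into the same
   three-parameter family.  Twirling u = v = (1,...,1), u = v = |i>,
   u = |i>, v = |j> (i <> j), and u = |i> + |j>, v = |i> - |j> produces
   multiples of the separable operators 1 + F - D, D, 1 - D and
   1 - F + (d - 1) D; when x >= |y| (that is, b, c >= 0), the two PPT
   inequalities say precisely that x 1 + y F + z D is a nonnegative
   combination of them. *)

From HB Require Import structures.
From mathcomp Require Import all_boot all_order all_algebra.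
From mathcomp Require Import complex mxtens.
From mathcomp Require Import reals.
From mathcomp Require Import ring lra.
Set Implicit Arguments. Unset Strict Implicit. Unset Printing Implicit Defensive.
Import Order.TTheory GRing.Theory Num.Theory.
Local Open Scope complex_scope.
Local Open Scope ring_scope.

Section IndicatorSums.
Variables (R : comPzRingType) (d : nat).

Lemma sum_indicator_pick (k : 'I_d) (F : 'I_d -> R) : \sum_(i < d) (k == i)%:R * F i = F k.
Proof.
rewrite (bigD1 k) //= eqxx mul1r big1 ?addr0 // => i /negbTE.
by rewrite eq_sym => ->; rewrite mul0r.
Qed.

Lemma sum_rel_pick (P : rel 'I_d) (k l : 'I_d) (F : 'I_d -> 'I_d -> R) :
  \sum_(i < d) \sum_(j < d | P i j) ((k == i) && (l == j))%:R * F i j = (P k l)%:R * F k l.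
Proof.
rewrite (bigD1 k) //= [X in _ + X]big1 ?addr0 => [|i /negbTE ik]; last first.
  by apply: big1 => j _; rewrite eq_sym ik mul0r.
rewrite eqxx; have [Pkl | nPkl] := boolP (P k l).
  rewrite (bigD1 l) //= eqxx mul1r big1 ?addr0 // => j /andP [_ /negbTE jl].
  by rewrite eq_sym jl mul0r.
rewrite mul0r; apply: big1 => j Pkj.
by rewrite (_ : l == j = false) ?mul0r //; apply: contraNF nPkl => /eqP ->.
Qed.

Lemma sum_indicator1 (k : 'I_d) (G : bool -> R) :
  \sum_(j < d) G (k == j) = d%:R * G false + (G true - G false).
Proof.
rewrite (eq_bigr (fun j => G false + (k == j)%:R * (G true - G false))); last first.
  by move=> j _; case: (k == j); rewrite ?mul1r ?mul0r ?addr0 // addrC subrK.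
by rewrite big_split /= sumr_const card_ord sum_indicator_pick mulr_natl.
Qed.

Lemma sum_indicator2 (k l : 'I_d) (G : bool -> bool -> R) : k != l ->
  \sum_(j < d) G (k == j) (l == j) = d%:R * G false false
    + (G true false - G false false) + (G false true - G false false).
Proof.
move=> neq_kl.
rewrite (eq_bigr (fun j => G false false + (k == j)%:R * (G true false - G false false)
                            + (l == j)%:R * (G false true - G false false))); last first.
  move=> j _; have [<-|neq_kj] := eqVneq k j.
    by rewrite eq_sym (negbTE neq_kl) mul1r mul0r addr0 addrC subrK.
  by case: (l == j); rewrite ?mul1r ?mul0r ?addr0 // addrC subrK.
by rewrite !big_split /= sumr_const card_ord !sum_indicator_pick mulr_natl.
Qed.

Lemma sum_pair_indicator1 (k : 'I_d) (G : bool -> bool -> R) :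
  \sum_(w : 'I_d * 'I_d) G (k == w.1) (k == w.2)
  = let H u := d%:R * G u false + (G u true - G u false) in
    d%:R * H false + (H true - H false).
Proof.
rewrite -(pair_bigA _ (fun i j => G (k == i) (k == j))) /=.
under eq_bigr => i _ do rewrite (sum_indicator1 k (G (k == i))).
by rewrite (sum_indicator1 k (fun u => d%:R * G u false + (G u true - G u false))).
Qed.

Lemma sum_pair_indicator2 (k l : 'I_d) (G : bool -> bool -> bool -> bool -> R) :
  k != l ->
  \sum_(w : 'I_d * 'I_d) G (k == w.1) (l == w.1) (k == w.2) (l == w.2)
  = let H u v := d%:R * G u v false false + (G u v true false - G u v false false)
                 + (G u v false true - G u v false false) in
    d%:R * H false false + (H true false - H false false) + (H false true - H false false).
Proof.
move=> neq_kl.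
rewrite -(pair_bigA _ (fun i j => G (k == i) (l == i) (k == j) (l == j))) /=.
under eq_bigr => i _ do rewrite (sum_indicator2 (G (k == i) (l == i)) neq_kl).
by rewrite (sum_indicator2 (fun u v => d%:R * G u v false false
  + (G u v true false - G u v false false) + (G u v false true - G u v false false)) neq_kl).
Qed.

Lemma sum_pair_neq (F : 'I_d * 'I_d -> R) :
  \sum_(w | w.1 != w.2) F w = \sum_w F w - \sum_(i < d) F (i, i).
Proof.
have diag : \sum_(w | ~~ (w.1 != w.2)) F w = \sum_(i < d) F (i, i).
  rewrite (eq_bigr (fun w => F (w.1, w.2))) => [|[] //].
  rewrite -(pair_big_dep xpredT (fun i j => ~~ (i != j)) (fun i j => F (i, j))) /=.
  by apply: eq_bigr => i _; rewrite (big_pred1 i) // => j; rewrite /= negbK eq_sym.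
by rewrite [\sum_w F w](bigID (fun w : 'I_d * 'I_d => w.1 != w.2)) /= diag addrK.
Qed.

Lemma prod_expr_indicator (z : R) (e : 'I_d -> nat) (k : 'I_d) :
  \prod_(p < d) z ^+ (e p * (p == k)) = z ^+ e k.
Proof.
rewrite (bigD1 k) //= eqxx muln1 big1 ?mulr1 // => p /negbTE ->.
by rewrite muln0 expr0.
Qed.

Lemma prod_natr_bool (P : pred 'I_d) : \prod_(p < d) (P p)%:R = [forall p, P p]%:R :> R.
Proof.
have [/forallP allP | /forallPn [p nPp]] := boolP [forall p, P p].
  by rewrite big1 // => p _; rewrite allP.
by rewrite (bigD1 p) //= (negbTE nPp) mul0r.
Qed.

End IndicatorSums.

Section Separable.
Variables (R : realType) (d : nat).
Local Notation C := R[i].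

Lemma separable0 : separable (0 : 'M[C]_(d * d)).
Proof. by exists 0%N, (fun _ => 0), (fun _ => 0), (fun _ => 0); rewrite big_ord0. Qed.

Lemma separableD (A B : 'M[C]_(d * d)) :
  separable A -> separable B -> separable (A + B).
Proof.
move=> [N1 [p1 [a1 [b1 [p1_ge0 ->]]]]] [N2 [p2 [a2 [b2 [p2_ge0 ->]]]]].
pose glue T (f1 : 'I_N1 -> T) (f2 : 'I_N2 -> T) k :=
  match split k with inl i => f1 i | inr j => f2 j end.
exists (N1 + N2)%N, (glue _ p1 p2), (glue _ a1 a2), (glue _ b1 b2); split.
  by move=> k; rewrite /glue; case: (split k).
rewrite big_split_ord; apply: f_equal2; apply: eq_bigr => i _.
  by rewrite /glue (unsplitK (inl _ i)).
by rewrite /glue (unsplitK (inr _ i)).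
Qed.

Lemma separableZ (r : R) (A : 'M[C]_(d * d)) :
  0 <= r -> separable A -> separable (r%:C *: A).
Proof.
move=> r_ge0 [N [p [a [b [p_ge0 ->]]]]].
exists N, (fun k => r * p k), a, b; split; first by move=> k; apply: mulr_ge0.
by rewrite scaler_sumr; apply: eq_bigr => k _; rewrite scalerA rmorphM.
Qed.

Lemma separable_sum (I : finType) (P : pred I) (F : I -> 'M[C]_(d * d)) :
  (forall i, P i -> separable (F i)) -> separable (\sum_(i | P i) F i).
Proof. by move=> sepF; apply: big_ind => //; [exact: separable0 | exact: separableD]. Qed.

Lemma separable_tensmx_ketbra (u v : 'cV[C]_d) :
  separable (tensmx (ketbra u) (ketbra v)).
Proof.
exists 1%N, (fun _ => 1), (fun _ => u), (fun _ => v); split => //.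
by rewrite big_ord1 scale1r.
Qed.

End Separable.

Section TensorEntries.
Variables (R : realType) (d : nat).
Local Notation C := R[i].
Local Notation idx := (@mxtens_index d d).

Lemma tens_matrixP (A B : 'M[C]_(d * d)) :
  (forall k l m n, A (idx (k, l)) (idx (m, n)) = B (idx (k, l)) (idx (m, n))) -> A = B.
Proof.
move=> eqAB; apply/matrixP => r s.
rewrite -[r]mxtens_unindexK -[s]mxtens_unindexK.
by case: (mxtens_unindex r) => k l; case: (mxtens_unindex s) => m n.
Qed.

Lemma idx_eq (k l m n : 'I_d) : (idx (k, l) == idx (m, n)) = (k == m) && (l == n).
Proof. by rewrite (can_eq (@mxtens_indexK d d)) xpair_eqE. Qed.

Lemma conj_real_complex (r : R) : (r%:C)^* = r%:C.
Proof. by apply: conj_Creal; apply/complex_realP; exists r. Qed.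

Lemma ketbraE n (v : 'cV[C]_n) r s : ketbra v r s = v r 0 * (v s 0)^*.
Proof. by rewrite /ketbra /adj !mxE big_ord1 !mxE. Qed.

Lemma ket2E (i j k l : 'I_d) : ket2 R i j (idx (k, l)) 0 = ((k == i) && (l == j))%:R.
Proof. by rewrite mxE idx_eq. Qed.

Definition tens_mx (f : 'I_d -> 'I_d -> 'I_d -> 'I_d -> C) : 'M[C]_(d * d) :=
  \matrix_(r, s) f (mxtens_unindex r).1 (mxtens_unindex r).2
                    (mxtens_unindex s).1 (mxtens_unindex s).2.

Lemma tens_mxE f k l m n : tens_mx f (idx (k, l)) (idx (m, n)) = f k l m n.
Proof. by rewrite mxE !mxtens_indexK. Qed.

(* [ifd_mx x y z] is x 1 + y F + z D, with F the flip |kl> |-> |lk> and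
   D = sum_i |ii><ii|. *)
Definition ifd_mx (x y z : R) : 'M[C]_(d * d) := tens_mx (fun k l m n =>
  (x * ((k == m) && (l == n))%:R + y * ((k == n) && (l == m))%:R
   + z * [&& k == l, k == m & k == n]%:R)%:C).

Lemma ifd_mxE (x y z : R) k l m n :
  ifd_mx x y z (idx (k, l)) (idx (m, n)) =
  (x * ((k == m) && (l == n))%:R + y * ((k == n) && (l == m))%:R
   + z * [&& k == l, k == m & k == n]%:R)%:C.
Proof. exact: tens_mxE. Qed.

Lemma ifd_mxD (x y z x' y' z' : R) :
  ifd_mx x y z + ifd_mx x' y' z' = ifd_mx (x + x') (y + y') (z + z').
Proof.
apply: tens_matrixP => k l m n.
by rewrite [LHS]mxE !ifd_mxE -rmorphD; congr (_%:C); ring.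
Qed.

Lemma ifd_mxZ (r x y z : R) : r%:C *: ifd_mx x y z = ifd_mx (r * x) (r * y) (r * z).
Proof.
apply: tens_matrixP => k l m n.
by rewrite [LHS]mxE !ifd_mxE -rmorphM; congr (_%:C); ring.
Qed.

Lemma sum_ketbra_diag : \sum_(i < d) ketbra (ket2 R i i) = ifd_mx 0 0 1.
Proof.
apply: tens_matrixP => k l m n.
rewrite ifd_mxE !mul0r !add0r mul1r rmorph_nat (eq_sym k l) (eq_sym k m) (eq_sym k n).
rewrite summxE -(sum_indicator_pick k (fun i => [&& l == i, m == i & n == i]%:R)).
by apply: eq_bigr => i _; rewrite ketbraE !ket2E conjC_nat -!natrM !mulnb -!andbA.
Qed.

Lemma sum_ketbra_pair (s : R) : s ^+ 2 = 1 ->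
  \sum_(i < d) \sum_(j < d | (i < j)%N)
     ketbra ((sqrtC 2)^-1 *: (ket2 R i j + s%:C *: ket2 R j i))
  = ifd_mx 2^-1 (s / 2) (- (1 + s) / 2).
Proof.
move=> s_sq; apply: tens_matrixP => k l m n.
have conj_inv_sqrt2 : ((sqrtC 2)^-1)^* = (sqrtC 2)^-1 :> C.
  by apply: conj_Creal; rewrite realV sqrtC_real ?ler0n.
have inv_sqrt2_sq : (sqrtC 2)^-1 * (sqrtC 2)^-1 = (2^-1)%:C :> C.
  by rewrite -invfM -expr2 sqrtCK fmorphV rmorph_nat.
rewrite ifd_mxE summxE; under eq_bigr do rewrite summxE.
pose e i j : R := ((m == i) && (n == j))%:R + s * ((m == j) && (n == i))%:R.
transitivity (\sum_(i < d) \sum_(j < d | (i < j)%N)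
   (((k == i) && (l == j))%:R * (2^-1 * e i j)
    + ((l == i) && (k == j))%:R * (2^-1 * s * e i j))%:C).
  apply: eq_bigr => i _; apply: eq_bigr => j _.
  rewrite ketbraE !mxE !idx_eq rmorphM /= conj_inv_sqrt2 rmorphD rmorphM /= conj_real_complex.
  rewrite !conjC_nat /e !(rmorphD, rmorphM, rmorph_nat) [(l == i) && _]andbC.
  by ring: inv_sqrt2_sq.
under eq_bigr do rewrite -rmorph_sum.
rewrite -rmorph_sum; congr (_%:C).
under eq_bigr do rewrite big_split /=.
rewrite big_split /= !sum_rel_pick /e !(eq_sym m) !(eq_sym n) -!mulnb !natrM.
have [lt_kl | lt_lk | /val_inj eq_kl] := ltngtP k l.
- have -> : (k == l) = false by rewrite -val_eqE ltn_eqF.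
  by rewrite /=; field.
- have -> : (k == l) = false by rewrite -val_eqE gtn_eqF.
  by rewrite /=; field: s_sq.
- by rewrite -eq_kl eqxx /=; field.
Qed.

Lemma rho_bcE (b c : R) :
  rho_bc d b c = ifd_mx ((b + c) / 2) ((c - b) / 2) (coef_a d b c - c).
Proof.
have sum_minus : \sum_(i < d) \sum_(j < d | (i < j)%N) ketbra (psi_minus R i j)
    = ifd_mx 2^-1 (-1 / 2) (- (1 + -1) / 2).
  rewrite -(@sum_ketbra_pair (-1)); last by rewrite sqrrN expr1n.
  by apply: eq_bigr => i _; apply: eq_bigr => j _; rewrite rmorphN1 scaleN1r.
have sum_plus : \sum_(i < d) \sum_(j < d | (i < j)%N) ketbra (psi_plus R i j)
    = ifd_mx 2^-1 (1 / 2) (- (1 + 1) / 2).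
  rewrite -(@sum_ketbra_pair 1); last by rewrite expr1n.
  by apply: eq_bigr => i _; apply: eq_bigr => j _; rewrite rmorph1 scale1r.
transitivity ((coef_a d b c)%:C *: ifd_mx 0 0 1
   + b%:C *: ifd_mx 2^-1 (-1 / 2) (- (1 + -1) / 2)
   + c%:C *: ifd_mx 2^-1 (1 / 2) (- (1 + 1) / 2)).
  rewrite /rho_bc; congr (_ *: _ + _ *: _ + _ *: _);
    [exact: sum_ketbra_diag | exact: sum_minus | exact: sum_plus].
by rewrite !ifd_mxZ !ifd_mxD; congr ifd_mx; field.
Qed.

End TensorEntries.

Section PartialTranspose.
Variables (R : realType) (d : nat).
Local Notation C := R[i].
Local Notation idx := (@mxtens_index d d).

Lemma adj_sum_scale (I : finType) (c : I -> R) n (u : I -> 'cV[C]_n) :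
  adj (\sum_i (c i)%:C *: u i) = \sum_i (c i)%:C *: adj (u i).
Proof.
apply/matrixP => p q; rewrite !mxE !summxE rmorph_sum; apply: eq_bigr => i _.
by rewrite !mxE rmorphM /= conj_real_complex.
Qed.

Lemma quad_ket2 (M : 'M[C]_(d * d)) p q p' q' :
  (adj (ket2 R p q) *m M *m ket2 R p' q') 0 0 = M (idx (p, q)) (idx (p', q')).
Proof.
have ket2_delta i j : ket2 R i j = delta_mx (idx (i, j)) 0.
  by apply/matrixP => r s; rewrite !mxE ord1 eqxx andbT.
have adj_delta r : adj (delta_mx r 0 : 'cV[C]_(d * d)) = delta_mx 0 r.
  by apply/matrixP => s t; rewrite !mxE conjC_nat andbC.
by rewrite !ket2_delta adj_delta -rowE -colE !mxE.
Qed.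

Lemma quad_ket2_comb (I : finType) (c : I -> R) (a b : I -> 'I_d) (M : 'M[C]_(d * d)) :
  let v := \sum_i (c i)%:C *: ket2 R (a i) (b i) in
  (adj v *m M *m v) 0 0
  = \sum_i \sum_j (c i * c j)%:C * M (idx (a i, b i)) (idx (a j, b j)).
Proof.
rewrite /= adj_sum_scale mulmx_suml mulmx_suml summxE; apply: eq_bigr => i _.
rewrite mulmx_sumr summxE; apply: eq_bigr => j _.
by rewrite -scalemxAl -scalemxAl -scalemxAr scalerA mxE quad_ket2 rmorphM.
Qed.

Lemma ptransE (M : 'M[C]_(d * d)) k l m n :
  ptrans M (idx (k, l)) (idx (m, n)) = M (idx (k, n)) (idx (m, l)).
Proof. by rewrite mxE !mxtens_indexK. Qed.

Lemma psd_ptrans_ifd (x y z : R) : (1 < d)%N ->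
  psdmx (ptrans (ifd_mx d x y z)) -> 0 <= x + z /\ 0 <= x + d%:R * y + z.
Proof.
move=> d_gt1 [_ psd]; have d_gt0 := ltnW d_gt1.
pose i0 := Ordinal d_gt0; pose i1 := Ordinal d_gt1.
split.
  pose c (t : bool) : R := if t then 1 else -1.
  pose a (t : bool) := if t then i0 else i1.
  have := psd (\sum_t (c t)%:C *: ket2 R (a t) (a t)).
  rewrite quad_ket2_comb !big_bool /= !ptransE !ifd_mxE /=.
  by rewrite -!rmorphM -!rmorphD ler0c; lra.
have := psd (\sum_i 1%:C *: ket2 R i i).
rewrite (quad_ket2_comb (fun _ => 1) id id) /=.
under eq_bigr => i _ do under eq_bigr => j _ do
  rewrite ptransE ifd_mxE (eq_sym j i) !eqxx !andbT !andbb -rmorphM.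
under eq_bigr => i _ do rewrite -rmorph_sum
  (sum_indicator1 i (fun b => 1 * 1 * (x * b%:R + y * true%:R + z * b%:R))).
rewrite -rmorph_sum sumr_const card_ord ler0c pmulrn_lge0 //=.
by lra.
Qed.

End PartialTranspose.

Section PhaseSums.
Variables (C : numClosedFieldType) (d : nat).

Definition upair_eq (k l m n : 'I_d) := ((k == m) && (l == n)) || ((k == n) && (l == m)).

Lemma upair_eq_count k l m n :
  [forall p, (p == k) + (p == l) == (p == m) + (p == n)]%N = upair_eq k l m n.
Proof.
apply/forallP/idP => [count_eq | ]; last first.
  by case/orP => /andP[/eqP <- /eqP <-] p; rewrite // addnC.
have := count_eq k; have := count_eq l; rewrite /upair_eq !eqxx (eq_sym k l).
have [<-|neq_km] := eqVneq k m; have [<-|neq_kn] := eqVneq k n => /=.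
- by case: (l == k).
- by case: (l == k); case: (l == n).
- by case: (l == k); case: (l == m).
- by [].
Qed.

Lemma sum_phase4 (a b : nat) : (a <= 2)%N -> (b <= 2)%N ->
  \sum_(u < 4) 'i ^+ (u * a) * (- 'i) ^+ (u * b) = 4%:R * (a == b)%:R :> C.
Proof.
have i_sq : 'i * 'i = -1 :> C by rewrite -expr2 sqrCi.
rewrite !big_ord_recr big_ord0 /=.
by case: a => [|[|[|//]]] _; case: b => [|[|[|//]]] _ /=; ring: i_sq.
Qed.

(* The sum factorises over the coordinates p, the p-th factor being
   4 [#{p in (k, l)} = #{p in (m, n)}]. *)
Lemma sum_phases k l m n :
  \sum_(w : {ffun 'I_d -> 'I_4}) 'i ^+ w k * 'i ^+ w l * ((- 'i) ^+ w m * (- 'i) ^+ w n)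
  = (4 ^ d)%:R * (upair_eq k l m n)%:R :> C.
Proof.
pose F p (u : 'I_4) : C :=
  'i ^+ (u * ((p == k) + (p == l))) * (- 'i) ^+ (u * ((p == m) + (p == n))).
transitivity (\sum_(w : {ffun 'I_d -> 'I_4}) \prod_p F p (w p)).
  apply: eq_bigr => w _; rewrite big_split /=.
  under eq_bigr do rewrite mulnDr exprD.
  rewrite big_split /= !prod_expr_indicator.
  under [X in _ = _ * X]eq_bigr do rewrite mulnDr exprD.
  by rewrite big_split /= !prod_expr_indicator mulrA.
rewrite -(bigA_distr_bigA F) /=.
have sum_F p : \sum_u F p u = 4%:R * ((p == k) + (p == l) == (p == m) + (p == n))%N%:R.
  by apply: sum_phase4; [case: (p == k); case: (p == l) | case: (p == m); case: (p == n)].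
under eq_bigr do rewrite sum_F.
by rewrite big_split /= prodr_const card_ord natrX prod_natr_bool upair_eq_count.
Qed.

End PhaseSums.

Section PhaseTwirl.
Variables (R : realType) (d : nat).
Local Notation C := R[i].
Local Notation idx := (@mxtens_index d d).

Definition phase_vec (x : 'I_d -> R) (w : {ffun 'I_d -> 'I_4}) : 'cV[C]_d :=
  \col_k ((x k)%:C * 'i ^+ w k).

(* The sum over the 4^d phase unitaries U_w = diag(i^(w k)) of
   (U_w (x) U_w) (|x><x| (x) |y><y|) (U_w (x) U_w)^*. *)
Definition twirl (x y : 'I_d -> R) : 'M[C]_(d * d) :=
  \sum_w tensmx (ketbra (phase_vec x w)) (ketbra (phase_vec y w)).

Lemma separable_twirl x y : separable (twirl x y).
Proof. by apply: separable_sum => w _; apply: separable_tensmx_ketbra. Qed.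

Lemma twirlE x y k l m n :
  twirl x y (idx (k, l)) (idx (m, n))
  = ((4 ^ d)%:R * (upair_eq k l m n)%:R * (x k * y l * x m * y n))%:C.
Proof.
rewrite !rmorphM !rmorph_nat -sum_phases mulr_suml summxE; apply: eq_bigr => w _.
rewrite tensmxE !ketbraE !mxE !rmorphM /= !rmorphXn /= conjCi !conj_real_complex.
by ring.
Qed.

Lemma sum_twirl_ifd (I : finType) (P : pred I) (x y : I -> 'I_d -> R) (a b c : R) :
  (forall k l, k != l -> \sum_(w | P w) x w k * y w l * x w k * y w l = a) ->
  (forall k l, k != l -> \sum_(w | P w) x w k * y w l * x w l * y w k = b) ->
  (forall k, \sum_(w | P w) x w k * y w k * x w k * y w k = a + b + c) ->
  \sum_(w | P w) twirl (x w) (y w)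
  = ifd_mx d ((4 ^ d)%:R * a) ((4 ^ d)%:R * b) ((4 ^ d)%:R * c).
Proof.
move=> sum_id sum_swap sum_diag; apply: tens_matrixP => k l m n.
rewrite summxE; under eq_bigr do rewrite twirlE.
rewrite -rmorph_sum ifd_mxE -mulr_sumr /upair_eq; congr (_%:C).
have [/andP [/eqP <- /eqP <-] | not_id] := boolP ((k == m) && (l == n)).
  have [<- | neq_kl] := eqVneq k l; first by rewrite sum_diag !eqxx /=; ring.
  by rewrite sum_id //=; ring.
have [/andP [/eqP eq_kn /eqP eq_lm] | not_swap] := boolP ((k == n) && (l == m)).
  subst n m; have neq_kl : k != l by apply: contraNneq not_id => ->; rewrite eqxx.
  by rewrite sum_swap // (negbTE neq_kl) /=; ring.
have -> : [&& k == l, k == m & k == n] = false.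
  by apply: contraNF not_id => /and3P [/eqP <- /eqP <- /eqP <-]; rewrite eqxx.
by rewrite /=; ring.
Qed.

Lemma twirl_const1 :
  twirl (fun _ => 1) (fun _ => 1) = ifd_mx d (4 ^ d)%:R (4 ^ d)%:R (- (4 ^ d)%:R).
Proof.
transitivity (\sum_(w < 1) twirl (fun _ : 'I_d => 1) (fun _ => 1)); first by rewrite big_ord1.
rewrite (@sum_twirl_ifd _ _ _ _ 1 1 (-1)).
- by rewrite mulr1 mulrN1.
- by move=> k l _; rewrite big_ord1; ring.
- by move=> k l _; rewrite big_ord1; ring.
- by move=> k; rewrite big_ord1; ring.
Qed.

Lemma sum_twirl_diag :
  \sum_(i < d) twirl (fun t => (t == i)%:R) (fun t => (t == i)%:R) = ifd_mx d 0 0 (4 ^ d)%:R.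
Proof.
rewrite (@sum_twirl_ifd _ _ _ _ 0 0 1).
- by rewrite mulr0 mulr1.
- move=> k l neq_kl.
  by rewrite (sum_indicator2 (fun u v => u%:R * v%:R * u%:R * v%:R) neq_kl) /=; ring.
- move=> k l neq_kl.
  by rewrite (sum_indicator2 (fun u v => u%:R * v%:R * v%:R * u%:R) neq_kl) /=; ring.
- by move=> k; rewrite (sum_indicator1 k (fun u => u%:R * u%:R * u%:R * u%:R)) /=; ring.
Qed.

Lemma sum_twirl_offdiag :
  \sum_(w : 'I_d * 'I_d | w.1 != w.2) twirl (fun t => (t == w.1)%:R) (fun t => (t == w.2)%:R)
  = ifd_mx d (4 ^ d)%:R 0 (- (4 ^ d)%:R).
Proof.
rewrite (@sum_twirl_ifd _ _ _ _ 1 0 (-1)).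
- by rewrite mulr1 mulr0 mulrN1.
- move=> k l neq_kl; rewrite sum_pair_neq /=.
  rewrite (sum_pair_indicator2 (fun a b c e => a%:R * e%:R * a%:R * e%:R) neq_kl).
  by rewrite (sum_indicator2 (fun u v => u%:R * v%:R * u%:R * v%:R) neq_kl) /=; ring.
- move=> k l neq_kl; rewrite sum_pair_neq /=.
  rewrite (sum_pair_indicator2 (fun a b c e => a%:R * e%:R * b%:R * c%:R) neq_kl).
  by rewrite (sum_indicator2 (fun u v => u%:R * v%:R * v%:R * u%:R) neq_kl) /=; ring.
- move=> k; rewrite sum_pair_neq /=.
  rewrite (sum_pair_indicator1 k (fun a c => a%:R * c%:R * a%:R * c%:R)).
  by rewrite (sum_indicator1 k (fun u => u%:R * u%:R * u%:R * u%:R)) /=; ring.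
Qed.

Lemma sum_twirl_pairs :
  \sum_(w : 'I_d * 'I_d) twirl (fun t => (t == w.1)%:R + (t == w.2)%:R)
                               (fun t => (t == w.1)%:R - (t == w.2)%:R)
  = ifd_mx d (2 * (4 ^ d)%:R) (- 2 * (4 ^ d)%:R) ((2 * d%:R - 2) * (4 ^ d)%:R).
Proof.
rewrite (@sum_twirl_ifd _ _ _ _ 2 (-2) (2 * d%:R - 2)).
- by congr ifd_mx; ring.
- move=> k l neq_kl; rewrite (sum_pair_indicator2
    (fun a b c e => (a%:R + c%:R) * (b%:R - e%:R) * (a%:R + c%:R) * (b%:R - e%:R)) neq_kl).
  by rewrite /=; ring.
- move=> k l neq_kl; rewrite (sum_pair_indicator2
    (fun a b c e => (a%:R + c%:R) * (b%:R - e%:R) * (b%:R + e%:R) * (a%:R - c%:R)) neq_kl).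
  by rewrite /=; ring.
- move=> k; rewrite (sum_pair_indicator1 k
    (fun a c => (a%:R + c%:R) * (a%:R - c%:R) * (a%:R + c%:R) * (a%:R - c%:R))).
  by rewrite /=; ring.
Qed.

Lemma separable_sum_twirl (I : finType) (P : pred I) (x y : I -> 'I_d -> R) :
  separable (\sum_(w | P w) twirl (x w) (y w)).
Proof. by apply: separable_sum => w _; apply: separable_twirl. Qed.

Lemma separable_ifd_ge0 (x y z : R) :
  0 <= y -> 0 <= x - y -> 0 <= x + z -> separable (ifd_mx d x y z).
Proof.
move=> y_ge0 xy_ge0 xz_ge0; pose N : R := (4 ^ d)%:R.
have N_ge0 : 0 <= N by rewrite ler0n.
have -> : ifd_mx d x y z =
    (y / N)%:C *: twirl (fun _ => 1) (fun _ => 1)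
  + ((x + z) / N)%:C *: \sum_(i < d) twirl (fun t => (t == i)%:R) (fun t => (t == i)%:R)
  + ((x - y) / N)%:C *: \sum_(w : 'I_d * 'I_d | w.1 != w.2)
                           twirl (fun t => (t == w.1)%:R) (fun t => (t == w.2)%:R).
  rewrite twirl_const1 sum_twirl_diag sum_twirl_offdiag !ifd_mxZ !ifd_mxD.
  by congr ifd_mx; field; rewrite pnatr_eq0 expn_eq0.
apply: separableD; [apply: separableD|]; apply: separableZ;
  rewrite ?divr_ge0 //; [exact: separable_twirl | exact: separable_sum_twirl..].
Qed.

Lemma separable_ifd_le0 (x y z : R) :
  y <= 0 -> 0 <= x + y -> 0 <= x + d%:R * y + z -> separable (ifd_mx d x y z).
Proof.
move=> y_le0 xy_ge0 xyz_ge0; pose N : R := (4 ^ d)%:R.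
have N_ge0 : 0 <= N by rewrite ler0n.
have -> : ifd_mx d x y z =
    (- y / 2 / N)%:C *: \sum_(w : 'I_d * 'I_d)
                         twirl (fun t => (t == w.1)%:R + (t == w.2)%:R)
                               (fun t => (t == w.1)%:R - (t == w.2)%:R)
  + ((x + d%:R * y + z) / N)%:C *:
      \sum_(i < d) twirl (fun t => (t == i)%:R) (fun t => (t == i)%:R)
  + ((x + y) / N)%:C *: \sum_(w : 'I_d * 'I_d | w.1 != w.2)
                          twirl (fun t => (t == w.1)%:R) (fun t => (t == w.2)%:R).
  rewrite sum_twirl_pairs sum_twirl_diag sum_twirl_offdiag !ifd_mxZ !ifd_mxD.
  by congr ifd_mx; field; rewrite pnatr_eq0 expn_eq0.
apply: separableD; [apply: separableD|]; apply: separableZ;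
  rewrite ?divr_ge0 ?oppr_ge0 //; exact: separable_sum_twirl.
Qed.

Lemma separable_ifd (x y z : R) :
  `|y| <= x -> 0 <= x + z -> 0 <= x + d%:R * y + z -> separable (ifd_mx d x y z).
Proof.
move=> y_le_x xz_ge0 xyz_ge0; have [y_ge0 | y_lt0] := lerP 0 y.
  by apply: separable_ifd_ge0; rewrite // subr_ge0 -(ger0_norm y_ge0).
apply: separable_ifd_le0 => //; first exact: ltW.
by rewrite -[y]opprK subr_ge0 -(ltr0_norm y_lt0).
Qed.

End PhaseTwirl.

Theorem mainTheorem7 (R : realType) (d : nat) (b c : R) :
  (2 <= d)%N -> 0 <= b -> 0 <= c -> 0 <= coef_a d b c ->
  psdmx (ptrans (rho_bc d b c)) -> separable (rho_bc d b c).
Proof.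
move=> d_ge2 b_ge0 c_ge0 _; rewrite rho_bcE => /(psd_ptrans_ifd d_ge2) [ppt1 ppt2].
by apply: separable_ifd => //; rewrite ler_norml; apply/andP; split; lra.
Qed.
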